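(* For any formula $A$, the contraction rules $\mathsf{cl}_A$: from $\Gamma,A,A\Rightarrow\Delta$ infer $\Gamma,A\Rightarrow\Delta$, and $\mathsf{cr}_A$: from $\Gamma\Rightarrow A,A,\Delta$ infer $\Gamma\Rightarrow A,\Delta$ (for arbitrary finite multisets $\Gamma,\Delta$) are admissible in $\mathsf{Grz}_\infty$; that is, whenever the premise is provable in $\mathsf{Grz}_\infty$, so is the conclusion.
   Context: Formulas are built from $\bot$ and atomic propositions using $\to$ and $\Box$. A sequent is $\Gamma\Rightarrow\Delta$ with $\Gamma,\Delta$ finite multisets of formulas; $\Box\Pi$ denotes the multiset $\{\Box B:B\in\Pi\}$. The calculus $\mathsf{Grz}_\infty$ (without cut) has initial sequents $\Gamma,p\Rightarrow p,\Delta$ ($p$ atomic) and $\Gamma,\bot\Rightarrow\Delta$, and rules: $(\to_L)$ from $\Gamma,B\Rightarrow\Delta$ and $\Gamma\Rightarrow A,\Delta$ infer $\Gamma,A\to B\Rightarrow\Delta$; $(\to_R)$ from $\Gamma,A\Rightarrow B,\Delta$ infer $\Gamma\Rightarrow A\to B,\Delta$; $(\mathsf{refl})$ from $\Gamma,B,\Box B\Rightarrow\Delta$ infer $\Gamma,\Box B\Rightarrow\Delta$; $(\Box)$ from left premise $\Gamma,\Box\Pi\Rightarrow A,\Delta$ and right premise $\Box\Pi\Rightarrow A$ infer $\Gamma,\Box\Pi\Rightarrow\Box A,\Delta$. An $\infty$-proof is a possibly infinite tree of sequents built by these rules, with leaves labelled by initial sequents, in which every infinite branch passes through a right premise of $(\Box)$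 infinitely often; a sequent is provable if it labels the root of an $\infty$-proof. *)

From Stdlib Require Import List Permutation Arith.
Import ListNotations.

Inductive form : Type :=
| Bot : form
| Var : nat -> form
| Imp : form -> form -> form
| Box : form -> form.

(* A sequent Gamma => Delta; multisets are represented by lists,
   considered up to permutation (see seq_eq). *)
Definition sequent : Type := (list form * list form)%type.

Definition seq_eq (Sq T : sequent) : Prop :=
  Permutation (fst Sq) (fst T) /\ Permutation (snd Sq) (snd T).

(* Rule names; the premises of RBox are ordered [left; right]. *)
Inductive rname : Type := RInit | RBot | RImpL | RImpR | RRefl | RBox.

Definition rule_ok (r : rname) (Sq : sequent) (Ps : list sequent) : Prop :=
  match r with
  | RInit => Ps = [] /\ exists p, In (Var p) (fst Sq) /\ In (Var p) (snd Sq)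
  | RBot => Ps = [] /\ In Bot (fst Sq)
  | RImpL => exists G D A B S1 S2, Ps = [S1; S2] /\
      seq_eq Sq (Imp A B :: G, D) /\ seq_eq S1 (B :: G, D) /\ seq_eq S2 (G, A :: D)
  | RImpR => exists G D A B S1, Ps = [S1] /\
      seq_eq Sq (G, Imp A B :: D) /\ seq_eq S1 (A :: G, B :: D)
  | RRefl => exists G D B S1, Ps = [S1] /\
      seq_eq Sq (Box B :: G, D) /\ seq_eq S1 (B :: Box B :: G, D)
  | RBox => exists G Pi D A S1 S2, Ps = [S1; S2] /\
      seq_eq Sq (G ++ map Box Pi, Box A :: D) /\
      seq_eq S1 (G ++ map Box Pi, A :: D) /\
      seq_eq S2 (map Box Pi, [A])
  end.

CoInductive ptree : Type :=
| node : sequent -> rname -> list ptree -> ptree.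

Definition pt_seq (t : ptree) : sequent := match t with node Sq _ _ => Sq end.
Definition pt_rule (t : ptree) : rname := match t with node _ r _ => r end.
Definition pt_children (t : ptree) : list ptree :=
  match t with node _ _ ts => ts end.

CoInductive locally_ok : ptree -> Prop :=
| lok : forall Sq r ts,
    rule_ok r Sq (map pt_seq ts) ->
    (forall t, In t ts -> locally_ok t) ->
    locally_ok (node Sq r ts).

Definition is_branch (t : ptree) (b : nat -> ptree) (idx : nat -> nat) : Prop :=
  b 0 = t /\
  forall n, nth_error (pt_children (b n)) (idx n) = Some (b (S n)).

(* Every infinite branch passes through a right premise of (Box) infinitely often. *)
Definition progressing (t : ptree) : Prop :=
  forall b idx, is_branch t b idx ->
    forall n, exists m, n <= m /\ pt_rule (b m) = RBox /\ idx m = 1.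

Definition infty_proof (t : ptree) : Prop := locally_ok t /\ progressing t.

Definition provable (Sq : sequent) : Prop :=
  exists t, infty_proof t /\ pt_seq t = Sq.

From Stdlib Require Import List Permutation Arith Lia Classical ClassicalEpsilon.
Import ListNotations.

(* Provability in Grz_infinity is the greatest fixed point of finite
   derivability: a sequent is provable iff it is the root of a finite
   derivation whose open leaves are right premises of (Box) that are provable
   again.  An infinity-proof is cut at its progress points; conversely a proof
   is rebuilt by corecursion, a height bound forcing progress on every branch.
   Hence a relation between sequents preserves provability as soon as every
   rule application on one side can be mimicked on the other, right premises
   of (Box) going to right premises of (Box).  Applied to the replacement of
   sub-multisets this gives weakening, invertibility of the implication rules
   and contraction of literals and of boxed formulas: a duplicated [Box B] in
   the boxed context of (Box) is contracted in both premises, and a contracted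
   principal [Box B] on the right is recovered from the right premise by
   weakening.  By inversion, contraction of an implication reduces to
   contraction of its components. *)

(** * Provability as a greatest fixed point *)

Definition is_progress (r : rname) (i : nat) : Prop := r = RBox /\ i = 1.

Fixpoint derivable_at (X : sequent -> Prop) (n : nat) (s : sequent) : Prop :=
  match n with
  | 0 => False
  | S n => exists r Ps, rule_ok r s Ps /\
      forall i P, nth_error Ps i = Some P ->
        (is_progress r i -> X P) /\ (~ is_progress r i -> derivable_at X n P)
  end.

Definition derivable (X : sequent -> Prop) (s : sequent) : Prop :=
  exists n, derivable_at X n s.

Lemma derivable_at_le X n m s : n <= m -> derivable_at X n s -> derivable_at X m s.
Proof.
  revert m s; induction n as [|n IH]; intros [|m] s Hle; simpl; try tauto; [lia|].
  intros (r & Ps & Hr & HPs); exists r, Ps; split; [exact Hr|].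
  intros i P E; destruct (HPs i P E) as [Hp Hnp]; split; [exact Hp|].
  intro Hi; apply (IH m); [lia | auto].
Qed.

Lemma derivable_mono (X Y : sequent -> Prop) :
  (forall s, X s -> Y s) -> forall s, derivable X s -> derivable Y s.
Proof.
  intros HXY s [n Hn]; exists n; revert s Hn; induction n as [|n IH]; simpl; [tauto|].
  intros s (r & Ps & Hr & HPs); exists r, Ps; split; [exact Hr|].
  intros i P E; destruct (HPs i P E); split; auto.
Qed.

Lemma nth_error_common_bound {A} (Q : nat -> nat -> A -> Prop) (l : list A) :
  (forall n m i a, n <= m -> Q n i a -> Q m i a) ->
  (forall i a, nth_error l i = Some a -> exists n, Q n i a) ->
  exists N, forall i a, nth_error l i = Some a -> Q N i a.
Proof.
  revert Q; induction l as [|a l IH]; intros Q Hmono Hex.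
  - exists 0; intros [|i] b E; discriminate.
  - destruct (Hex 0 a eq_refl) as [n0 Hn0].
    destruct (IH (fun n i => Q n (S i))) as [N HN].
    + intros n m i; apply Hmono.
    + intros i; apply (Hex (S i)).
    + exists (max n0 N); intros [|i] b E; simpl in E.
      * injection E as <-; eapply Hmono; [|exact Hn0]; lia.
      * eapply Hmono; [|exact (HN i b E)]; lia.
Qed.

Lemma derivable_rule X r s Ps : rule_ok r s Ps ->
  (forall i P, nth_error Ps i = Some P ->
     (is_progress r i -> X P) /\ (~ is_progress r i -> derivable X P)) ->
  derivable X s.
Proof.
  intros Hr HPs.
  destruct (nth_error_common_bound
    (fun n i P => (is_progress r i -> X P) /\ (~ is_progress r i -> derivable_at X n P)) Ps)
    as [N HN].
  - intros n m i P Hle [Hp Hnp]; split; [exact Hp|].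
    intro Hi; eapply derivable_at_le; eauto.
  - intros i P E; destruct (HPs i P E) as [Hp Hnp].
    destruct (classic (is_progress r i)) as [Hi|Hi].
    + exists 0; split; tauto.
    + destruct (Hnp Hi) as [n Hn]; exists n; split; tauto.
  - exists (S N), r, Ps; split; assumption.
Qed.

Lemma derivable_ind X (Q : sequent -> Prop) :
  (forall r s Ps, rule_ok r s Ps ->
     (forall i P, nth_error Ps i = Some P ->
        (is_progress r i -> X P) /\ (~ is_progress r i -> derivable X P /\ Q P)) ->
     Q s) ->
  forall s, derivable X s -> Q s.
Proof.
  intros Hstep s [n Hn]; revert s Hn; induction n as [|n IH]; simpl; [tauto|].
  intros s (r & Ps & Hr & HPs); apply (Hstep r s Ps Hr).
  intros i P E; destruct (HPs i P E) as [Hp Hnp]; split; [exact Hp|].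
  intro Hi; split; [exists n|]; auto.
Qed.

Lemma nth_error_choice {A B} (Phi : nat -> A -> B -> Prop) (l : list A) :
  (forall i a, nth_error l i = Some a -> exists b, Phi i a b) ->
  exists l', map fst l' = l /\ forall i q, nth_error l' i = Some q -> Phi i (fst q) (snd q).
Proof.
  revert Phi; induction l as [|a l IH]; intros Phi Hex.
  - exists []; split; [reflexivity|]; intros [|i] q E; discriminate.
  - destruct (Hex 0 a eq_refl) as [b Hb].
    destruct (IH (fun i => Phi (S i))) as [l' [E1 E2]]; [intros i; apply (Hex (S i))|].
    exists ((a, b) :: l'); split; [simpl; congruence|].
    intros [|i] q E; simpl in E; [injection E as <-; exact Hb | exact (E2 i q E)].
Qed.

Lemma rule_ok_length r s Ps : rule_ok r s Ps -> length Ps <= 2.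
Proof.
  destruct r; simpl.
  - intros [-> _]; simpl; lia.
  - intros [-> _]; simpl; lia.
  - intros (G & D & A & B & S1 & S2 & -> & _); simpl; lia.
  - intros (G & D & A & B & S1 & -> & _); simpl; lia.
  - intros (G & D & B & S1 & -> & _); simpl; lia.
  - intros (G & Pi & D & A & S1 & S2 & -> & _); simpl; lia.
Qed.

(* Rules have at most two premises; spelling out the map keeps the
   corecursive calls guarded. *)
Definition map2 {A B} (f : A -> B) (l : list A) : list B :=
  match l with [a] => [f a] | [a; b] => [f a; f b] | _ => [] end.

Lemma map2_map {A B} (f : A -> B) l : length l <= 2 -> map2 f l = map f l.
Proof. destruct l as [|a [|b [|c l]]]; simpl; auto; lia. Qed.

Section Corecursion.

Variable X : sequent -> Prop.
Hypothesis X_derivable : forall s, X s -> derivable X s.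

(* A state pairs a sequent with a bound on the height of its derivation; the
   bound decreasing along non-progress premises makes [build] progressing. *)
Definition good_step (st : sequent * nat) (c : rname * list (sequent * nat)) : Prop :=
  rule_ok (fst c) (fst st) (map fst (snd c)) /\
  forall i q, nth_error (snd c) i = Some q ->
    derivable_at X (snd q) (fst q) /\ (~ is_progress (fst c) i -> snd q < snd st).

Lemma good_step_exists st : derivable_at X (snd st) (fst st) -> exists c, good_step st c.
Proof.
  destruct st as [s [|n]]; simpl; [tauto|]; intros (r & Ps & Hr & HPs).
  destruct (nth_error_choice
    (fun i P k => derivable_at X k P /\ (~ is_progress r i -> k < S n)) Ps) as [Qs [E1 E2]].
  - intros i P E; destruct (HPs i P E) as [Hp Hnp].
    destruct (classic (is_progress r i)) as [Hi|Hi].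
    + destruct (X_derivable P (Hp Hi)) as [k Hk]; exists k; tauto.
    + exists n; split; auto.
  - exists (r, Qs); split; simpl; [rewrite E1; exact Hr | exact E2].
Qed.

Definition next_step (st : sequent * nat) : rname * list (sequent * nat) :=
  epsilon (inhabits (RInit, [])) (good_step st).

Lemma next_step_good st : derivable_at X (snd st) (fst st) -> good_step st (next_step st).
Proof. intro H; unfold next_step; apply epsilon_spec, good_step_exists, H. Qed.

CoFixpoint build (st : sequent * nat) : ptree :=
  node (fst st) (fst (next_step st)) (map2 build (snd (next_step st))).

Lemma build_unfold st :
  build st = node (fst st) (fst (next_step st)) (map2 build (snd (next_step st))).
Proof.
  change (build st = match build st with node a b c => node a b c end).
  now destruct (build st).
Qed.

Lemma build_seq st : pt_seq (build st) = fst st.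
Proof. now rewrite build_unfold. Qed.

Lemma build_unfold_good st : derivable_at X (snd st) (fst st) ->
  build st = node (fst st) (fst (next_step st)) (map build (snd (next_step st))).
Proof.
  intro H; rewrite build_unfold, map2_map; [reflexivity|].
  destruct (next_step_good st H) as [Hr _].
  apply rule_ok_length in Hr; now rewrite length_map in Hr.
Qed.

Lemma build_locally_ok st : derivable_at X (snd st) (fst st) -> locally_ok (build st).
Proof.
  revert st; cofix CIH; intros st H.
  rewrite (build_unfold_good st H).
  destruct (next_step_good st H) as [Hr Hq]; constructor.
  - rewrite map_map; erewrite map_ext; [exact Hr|]; intro; apply build_seq.
  - intros t Ht; apply in_map_iff in Ht as [q [<- Hin]]; apply CIH.
    apply In_nth_error in Hin as [i Hi]; apply (Hq i q Hi).
Qed.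

Lemma build_branch_step b idx k st :
  (forall n, nth_error (pt_children (b n)) (idx n) = Some (b (S n))) ->
  b k = build st -> derivable_at X (snd st) (fst st) ->
  pt_rule (b k) = fst (next_step st) /\
  exists q, nth_error (snd (next_step st)) (idx k) = Some q /\ b (S k) = build q.
Proof.
  intros Hb E H; specialize (Hb k); rewrite E, (build_unfold_good st H) in *; simpl in *.
  split; [reflexivity|].
  rewrite nth_error_map in Hb.
  destruct (nth_error (snd (next_step st)) (idx k)) as [q|]; inversion Hb; eauto.
Qed.

Lemma build_progressing st : derivable_at X (snd st) (fst st) -> progressing (build st).
Proof.
  intros H b idx [Hb0 Hb] n.
  assert (Hinv : forall k, exists st', b k = build st' /\ derivable_at X (snd st') (fst st')).
  { induction k as [|k [st' [E H']]]; [now exists st|].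
    destruct (build_branch_step b idx k st' Hb E H') as [_ [q [Eq Eb]]].
    exists q; split; [exact Eb|]; apply (proj2 (next_step_good st' H') _ _ Eq). }
  assert (Hfind : forall N k st', b k = build st' -> derivable_at X (snd st') (fst st') ->
            snd st' <= N -> exists m, k <= m /\ pt_rule (b m) = RBox /\ idx m = 1).
  { induction N as [|N IH]; intros k st' E H' HN.
    - destruct st' as [s' [|n']]; simpl in *; [tauto | lia].
    - destruct (build_branch_step b idx k st' Hb E H') as [Er [q [Eq Eb]]].
      destruct (classic (is_progress (fst (next_step st')) (idx k))) as [[Hr Hi]|Hi].
      + exists k; rewrite Er; auto.
      + destruct (proj2 (next_step_good st' H') _ _ Eq) as [Hq Hlt].
        destruct (IH (S k) q Eb Hq ltac:(specialize (Hlt Hi); lia)) as [m Hm].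
        exists m; split; [lia | apply Hm]. }
  destruct (Hinv n) as [st' [E H']]; exact (Hfind (snd st') n st' E H' (le_n _)).
Qed.

End Corecursion.

Lemma provable_coind (X : sequent -> Prop) :
  (forall s, X s -> derivable X s) -> forall s, X s -> provable s.
Proof.
  intros HX s Hs; destruct (HX s Hs) as [n Hn].
  exists (build X (s, n)); split; [split|].
  - now apply build_locally_ok.
  - now apply build_progressing.
  - apply build_seq.
Qed.

Lemma infty_proof_child t i c :
  infty_proof t -> nth_error (pt_children t) i = Some c -> infty_proof c.
Proof.
  destruct t as [s r ts]; intros [Hl Hp] E; simpl in E.
  inversion Hl as [? ? ? _ Hkids]; subst; split.
  - eapply Hkids, nth_error_In, E.
  - intros b idx [Hb0 Hb] n.
    set (b' := fun k => match k with 0 => node s r ts | S k => b k end).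
    set (idx' := fun k => match k with 0 => i | S k => idx k end).
    assert (Hbr : is_branch (node s r ts) b' idx').
    { split; [reflexivity|]; intros [|k]; simpl; [rewrite Hb0; exact E | apply Hb]. }
    destruct (Hp b' idx' Hbr (S n)) as [[|m] [Hm Hbox]]; [lia|].
    exists m; split; [lia | exact Hbox].
Qed.

Lemma non_progressing_branch (Bad : ptree -> Prop) t :
  (forall u, Bad u -> exists i c, nth_error (pt_children u) i = Some c /\
                              ~ is_progress (pt_rule u) i /\ Bad c) ->
  Bad t -> exists b idx, is_branch t b idx /\ forall n, ~ is_progress (pt_rule (b n)) (idx n).
Proof.
  intros Hstep Ht.
  set (P u (p : ptree * nat) :=
         nth_error (pt_children u) (snd p) = Some (fst p) /\
         ~ is_progress (pt_rule u) (snd p) /\ Bad (fst p)).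
  set (next u := epsilon (inhabits (u, 0)) (P u)).
  assert (Hnext : forall u, Bad u -> P u (next u)).
  { intros u Hu; apply epsilon_spec; destruct (Hstep u Hu) as (i & c & Hc); now exists (c, i). }
  set (b := fix b k := match k with 0 => t | S k => fst (next (b k)) end).
  assert (Hbad : forall k, Bad (b k)).
  { induction k as [|k IH]; [exact Ht | apply (Hnext _ IH)]. }
  exists b, (fun k => snd (next (b k))); split; [split; [reflexivity|]|].
  - intro k; apply (Hnext _ (Hbad k)).
  - intro k; apply (Hnext _ (Hbad k)).
Qed.

Lemma provable_derivable s : provable s -> derivable provable s.
Proof.
  intros [t [Ht <-]]; apply NNPP; intro Hnd.
  destruct (non_progressing_branch
    (fun u => infty_proof u /\ ~ derivable provable (pt_seq u)) t)
    as (b & idx & Hbr & Hnp); [| now split |].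
  - intros [s r ts] [Hu Hund]; apply NNPP; intro Hno; apply Hund.
    pose proof Hu as [Hl _]; inversion Hl as [? ? ? Hr _]; subst.
    apply (derivable_rule _ r s (map pt_seq ts) Hr); intros i P E.
    rewrite nth_error_map in E.
    destruct (nth_error ts i) as [c|] eqn:Ec; inversion E; subst.
    assert (Hc : infty_proof c) by now apply (infty_proof_child _ i c Hu).
    split; [intros _; now exists c|].
    intro Hi; apply NNPP; intro Hcd; apply Hno; now exists i, c.
  - destruct Ht as [_ Hprog]; destruct (Hprog b idx Hbr 0) as [m [_ Hm]].
    exact (Hnp m Hm).
Qed.

Lemma derivable_provable s : derivable provable s -> provable s.
Proof.
  apply provable_coind; intros s' Hs'.
  apply (derivable_mono provable); [apply provable_derivable | exact Hs'].
Qed.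

Lemma provable_rule r s Ps : rule_ok r s Ps ->
  (forall i P, nth_error Ps i = Some P -> provable P) -> provable s.
Proof.
  intros Hr HPs; apply derivable_provable, (derivable_rule _ r s Ps Hr).
  intros i P E; split; intros _; [exact (HPs i P E) | exact (provable_derivable P (HPs i P E))].
Qed.

(** * Simulations *)

(* A premise related to a progress premise must itself be a progress premise:
   simulations are finite only between progress points. *)
Definition sim_step (Rel : sequent -> sequent -> Prop) (s' : sequent)
    (r : rname) (Ps : list sequent) : Prop :=
  provable s' \/ exists r' Ps', rule_ok r' s' Ps' /\
    forall i P', nth_error Ps' i = Some P' -> provable P' \/
      exists j P, nth_error Ps j = Some P /\ Rel P P' /\ (is_progress r j -> is_progress r' i).

Lemma provable_simulation (Rel : sequent -> sequent -> Prop) :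
  (forall s s' r Ps, Rel s s' -> rule_ok r s Ps ->
     (forall i P, nth_error Ps i = Some P -> provable P) -> sim_step Rel s' r Ps) ->
  forall s s', provable s -> Rel s s' -> provable s'.
Proof.
  intros Hsim.
  set (Y T := provable T \/ exists s, provable s /\ Rel s T).
  assert (HY : forall T, provable T -> derivable Y T).
  { intros T HT; apply (derivable_mono provable); [unfold Y; tauto|].
    now apply provable_derivable. }
  assert (Hrel : forall s, derivable provable s -> forall s', Rel s s' -> derivable Y s').
  { apply (derivable_ind provable (fun s => forall s', Rel s s' -> derivable Y s')).
    intros r s Ps Hr HPs s' Hss'.
    assert (Hprov : forall i P, nth_error Ps i = Some P -> provable P).
    { intros i P E; destruct (HPs i P E) as [Hp Hnp].
      destruct (classic (is_progress r i)) as [Hi|Hi]; [auto | apply derivable_provable, Hnp, Hi]. }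
    destruct (Hsim s s' r Ps Hss' Hr Hprov) as [Hs'|(r' & Ps' & Hr' & HPs')]; [now apply HY|].
    apply (derivable_rule Y r' s' Ps' Hr'); intros i P' E.
    destruct (HPs' i P' E) as [HP'|(j & P & Ej & HPP' & Hij)].
    - split; [left; exact HP' | intros _; now apply HY].
    - split; [intros Hi; right; exists P; split; [apply (Hprov j) |]; assumption|].
      intros Hi; apply (proj2 (HPs j P Ej)); [intro Hj; exact (Hi (Hij Hj)) | exact HPP']. }
  intros s s' Hs Hss'; apply (provable_coind Y).
  - intros T [HT | (s0 & Hs0 & Hs0T)]; [now apply HY|].
    exact (Hrel s0 (provable_derivable s0 Hs0) T Hs0T).
  - right; now exists s.
Qed.

(** * Multisets of formulas *)

Definition form_eq_dec : forall x y : form, {x = y} + {x <> y}.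
Proof. repeat decide equality. Defined.

Notation cnt x l := (count_occ form_eq_dec l x).

Fixpoint form_size (x : form) : nat :=
  match x with
  | Bot | Var _ => 1
  | Imp a b => S (form_size a + form_size b)
  | Box a => S (form_size a)
  end.

Lemma count_cons x y l : cnt x (y :: l) = (if form_eq_dec y x then 1 else 0) + cnt x l.
Proof. simpl; now destruct (form_eq_dec y x). Qed.

Lemma count_map_Box_Box y l : cnt (Box y) (map Box l) = cnt y l.
Proof. symmetry; apply count_occ_map; congruence. Qed.

Lemma count_map_Box_Imp a b l : cnt (Imp a b) (map Box l) = 0.
Proof. apply count_occ_not_In; intros [y [E _]]%in_map_iff; discriminate. Qed.

Lemma count_map_Box_Var p l : cnt (Var p) (map Box l) = 0.
Proof. apply count_occ_not_In; intros [y [E _]]%in_map_iff; discriminate. Qed.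

Lemma count_map_Box_Bot l : cnt Bot (map Box l) = 0.
Proof. apply count_occ_not_In; intros [y [E _]]%in_map_iff; discriminate. Qed.

Lemma seq_eq_count s t : seq_eq s t <->
  (forall x, cnt x (fst s) = cnt x (fst t)) /\ (forall x, cnt x (snd s) = cnt x (snd t)).
Proof. unfold seq_eq; now rewrite !(Permutation_count_occ form_eq_dec). Qed.

Lemma seq_eq_refl s : seq_eq s s.
Proof. split; apply Permutation_refl. Qed.

Lemma submultiset_split l m : (forall x, cnt x l <= cnt x m) -> exists k, Permutation m (k ++ l).
Proof.
  revert m; induction l as [|a l IH]; intros m Hlm.
  - exists m; now rewrite app_nil_r.
  - assert (Ha : In a m).
    { apply (count_occ_In form_eq_dec); specialize (Hlm a); rewrite count_cons in Hlm.
      destruct (form_eq_dec a a); [lia | congruence]. }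
    destruct (in_split a m Ha) as (m1 & m2 & ->).
    destruct (IH (m1 ++ m2)) as [k Hk].
    { intro x; specialize (Hlm x); rewrite count_occ_app.
      rewrite count_cons, count_occ_app, count_cons in Hlm; destruct (form_eq_dec a x); lia. }
    exists k; rewrite <- Permutation_middle, Hk; apply Permutation_middle.
Qed.

Lemma In_perm_cons {A} (x : A) l : In x l -> exists l', Permutation l (x :: l').
Proof.
  intros (l1 & l2 & ->)%in_split; exists (l1 ++ l2); symmetry; apply Permutation_middle.
Qed.

Ltac count_simpl :=
  cbn [fst snd] in *;
  rewrite ?count_occ_app, ?count_occ_nil, ?count_cons, ?count_map_Box_Box,
    ?count_map_Box_Imp, ?count_map_Box_Var, ?count_map_Box_Bot in *.

(* Resolves equations between formulas: distinct constructors, injectivity,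
   and cyclic equations such as [a = Box a], refuted by size. *)
Ltac form_eq_clean :=
  repeat match goal with
  | H : @eq form ?a ?a |- _ => clear H
  | H : @eq form ?a ?b |- _ =>
      first [ discriminate H
            | (apply (f_equal form_size) in H; cbn [form_size] in H; lia)
            | subst b | subst a
            | (injection H; clear H; intros) ]
  end.

Ltac form_eq_cases :=
  repeat (first
    [ progress form_eq_clean
    | progress count_simpl
    | match goal with
      | |- context [form_eq_dec ?a ?b] => destruct (form_eq_dec a b)
      | H : context [form_eq_dec ?a ?b] |- _ => destruct (form_eq_dec a b)
      end ]).

Ltac count_at x :=
  repeat match goal with H : forall y : form, _ |- _ => specialize (H x) end;
  form_eq_cases; try (exfalso; congruence); lia.

Ltac count_solve := let x := fresh "x" in intro x; count_at x.

Ltac counts_of_seq_eq :=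
  repeat match goal with
  | H : seq_eq _ _ |- _ => apply seq_eq_count in H; destruct H
  | H : Permutation _ _ |- _ => rewrite (Permutation_count_occ form_eq_dec) in H
  end.

Definition replaces (L R L' R' : list form) (s s' : sequent) : Prop :=
  (forall x, cnt x L <= cnt x (fst s)) /\ (forall x, cnt x R <= cnt x (snd s)) /\
  (forall x, cnt x (fst s) + cnt x L' = cnt x (fst s') + cnt x L) /\
  (forall x, cnt x (snd s) + cnt x R' = cnt x (snd s') + cnt x R).

Ltac counts := unfold replaces in *; counts_of_seq_eq;
  repeat match goal with H : _ /\ _ |- _ => destruct H end.

Section Replacement.

Variables L R L' R' : list form.

Lemma replaces_In_left x s s' : replaces L R L' R' s s' -> (In x L -> In x L') ->
  In x (fst s) -> In x (fst s').
Proof.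
  rewrite !(count_occ_In form_eq_dec); intros (HL & _ & Hs & _) HLL'.
  specialize (HL x); specialize (Hs x).
  destruct (Nat.eq_0_gt_0_cases (cnt x L)) as [H0|Hpos]; [lia|].
  apply HLL' in Hpos; lia.
Qed.

Lemma replaces_In_right x s s' : replaces L R L' R' s s' -> (In x R -> In x R') ->
  In x (snd s) -> In x (snd s').
Proof.
  rewrite !(count_occ_In form_eq_dec); intros (_ & HR & _ & Hs) HRR'.
  specialize (HR x); specialize (Hs x).
  destruct (Nat.eq_0_gt_0_cases (cnt x R)) as [H0|Hpos]; [lia|].
  apply HRR' in Hpos; lia.
Qed.

Lemma sim_step_ImpL s s' A B G D S1 S2 :
  replaces L R L' R' s s' ->
  seq_eq s (Imp A B :: G, D) -> seq_eq S1 (B :: G, D) -> seq_eq S2 (G, A :: D) ->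
  cnt (Imp A B) L < cnt (Imp A B) (fst s) ->
  sim_step (replaces L R L' R') s' RImpL [S1; S2].
Proof.
  intros Hss' Hs H1 H2 Hc.
  destruct (In_perm_cons (Imp A B) (fst s')) as [G' HG'].
  { apply (count_occ_In form_eq_dec); counts; count_at (Imp A B). }
  right; exists RImpL, [(B :: G', snd s'); (G', A :: snd s')]; split.
  - exists G', (snd s'), A, B, (B :: G', snd s'), (G', A :: snd s').
    repeat split; try apply Permutation_refl; exact HG'.
  - intros [|[|[]]] P' E; inversion E; subst; right.
    + exists 0, S1; split; [reflexivity|]; split; [counts; repeat split; count_solve|].
      intros [? ?]; discriminate.
    + exists 1, S2; split; [reflexivity|]; split; [counts; repeat split; count_solve|].
      intros [? ?]; discriminate.
Qed.

Lemma sim_step_ImpR s s' A B G D S1 :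
  replaces L R L' R' s s' ->
  seq_eq s (G, Imp A B :: D) -> seq_eq S1 (A :: G, B :: D) ->
  cnt (Imp A B) R < cnt (Imp A B) (snd s) ->
  sim_step (replaces L R L' R') s' RImpR [S1].
Proof.
  intros Hss' Hs H1 Hc.
  destruct (In_perm_cons (Imp A B) (snd s')) as [D' HD'].
  { apply (count_occ_In form_eq_dec); counts; count_at (Imp A B). }
  right; exists RImpR, [(A :: fst s', B :: D')]; split.
  - exists (fst s'), D', A, B, (A :: fst s', B :: D').
    repeat split; try apply Permutation_refl; exact HD'.
  - intros [|[]] P' E; inversion E; subst; right.
    exists 0, S1; split; [reflexivity|]; split; [counts; repeat split; count_solve|].
    intros [? ?]; discriminate.
Qed.

Lemma sim_step_Refl s s' B G D S1 :
  replaces L R L' R' s s' ->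
  seq_eq s (Box B :: G, D) -> seq_eq S1 (B :: Box B :: G, D) ->
  In (Box B) (fst s') ->
  sim_step (replaces L R L' R') s' RRefl [S1].
Proof.
  intros Hss' Hs H1 [G' HG']%In_perm_cons.
  right; exists RRefl, [(B :: Box B :: G', snd s')]; split.
  - exists G', (snd s'), B, (B :: Box B :: G', snd s').
    repeat split; try apply Permutation_refl; exact HG'.
  - intros [|[]] P' E; inversion E; subst; right.
    exists 0, S1; split; [reflexivity|]; split; [counts; repeat split; count_solve|].
    intros [? ?]; discriminate.
Qed.

Lemma sim_step_Box s s' G Pi D A S1 S2 :
  replaces L R L' R' s s' ->
  seq_eq s (G ++ map Box Pi, Box A :: D) -> seq_eq S1 (G ++ map Box Pi, A :: D) ->
  seq_eq S2 (map Box Pi, [A]) -> provable S2 ->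
  (forall x, cnt x L <= cnt x G) -> cnt (Box A) R < cnt (Box A) (snd s) ->
  sim_step (replaces L R L' R') s' RBox [S1; S2].
Proof.
  intros Hss' Hs H1 H2 HS2 HLG Hc.
  destruct (submultiset_split (map Box Pi) (fst s')) as [G' HG'].
  { counts; count_solve. }
  destruct (In_perm_cons (Box A) (snd s')) as [D' HD'].
  { apply (count_occ_In form_eq_dec); counts; count_at (Box A). }
  right; exists RBox, [(G' ++ map Box Pi, A :: D'); S2]; split.
  - exists G', Pi, D', A, (G' ++ map Box Pi, A :: D'), S2.
    split; [reflexivity|]; split; [split; assumption|]; split; [apply seq_eq_refl | exact H2].
  - intros [|[|[]]] P' E; inversion E; subst; [right | left; exact HS2].
    exists 0, S1; split; [reflexivity|]; split; [counts; repeat split; count_solve|].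
    intros [? ?]; discriminate.
Qed.

(* The rule applied to [s] is simulated on [s'] by the same rule unless its
   principal formula (or, for (Box), its boxed context) is among those being
   replaced; the three remaining situations are left to the caller. *)
Lemma replaces_sim_step s s' r Ps :
  replaces L R L' R' s s' -> rule_ok r s Ps ->
  (forall i P, nth_error Ps i = Some P -> provable P) ->
  (forall x, In x L -> In x L' \/ exists a b, x = Imp a b) ->
  (forall p, In (Var p) R -> In (Var p) R') ->
  (forall A B G D S1 S2,
     seq_eq s (Imp A B :: G, D) -> seq_eq S1 (B :: G, D) -> seq_eq S2 (G, A :: D) ->
     cnt (Imp A B) (fst s) <= cnt (Imp A B) L -> provable S1 -> provable S2 ->
     sim_step (replaces L R L' R') s' RImpL [S1; S2]) ->
  (forall A B G D S1,
     seq_eq s (G, Imp A B :: D) -> seq_eq S1 (A :: G, B :: D) ->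
     cnt (Imp A B) (snd s) <= cnt (Imp A B) R -> provable S1 ->
     sim_step (replaces L R L' R') s' RImpR [S1]) ->
  (forall G Pi D A S1 S2,
     seq_eq s (G ++ map Box Pi, Box A :: D) -> seq_eq S1 (G ++ map Box Pi, A :: D) ->
     seq_eq S2 (map Box Pi, [A]) ->
     (exists x, cnt x G < cnt x L) \/ cnt (Box A) (snd s) <= cnt (Box A) R ->
     provable S1 -> provable S2 ->
     sim_step (replaces L R L' R') s' RBox [S1; S2]) ->
  sim_step (replaces L R L' R') s' r Ps.
Proof.
  intros Hss' Hr Hprov HkeepL HkeepR HImpL HImpR HBox.
  assert (Hkept : forall x, In x (fst s) -> (forall a b, x <> Imp a b) -> In x (fst s')).
  { intros x Hx Hnimp; apply (replaces_In_left x s s' Hss'); [|exact Hx].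
    intros HxL; destruct (HkeepL x HxL) as [|(a & b & ->)]; [assumption|].
    exfalso; exact (Hnimp a b eq_refl). }
  destruct r; simpl in Hr.
  - destruct Hr as [-> (p & H1 & H2)]; right; exists RInit, []; split.
    + split; [reflexivity|]; exists p; split; [apply Hkept; [exact H1 | discriminate]|].
      exact (replaces_In_right (Var p) s s' Hss' (HkeepR p) H2).
    + intros [|i] P' E; discriminate.
  - destruct Hr as [-> H1]; right; exists RBot, []; split.
    + split; [reflexivity | apply Hkept; [exact H1 | discriminate]].
    + intros [|i] P' E; discriminate.
  - destruct Hr as (G & D & A & B & S1 & S2 & -> & Hs & H1 & H2).
    destruct (le_lt_dec (cnt (Imp A B) (fst s)) (cnt (Imp A B) L)).
    + apply (HImpL A B G D); auto; [apply (Hprov 0) | apply (Hprov 1)]; reflexivity.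
    + eapply sim_step_ImpL; eauto.
  - destruct Hr as (G & D & A & B & S1 & -> & Hs & H1).
    destruct (le_lt_dec (cnt (Imp A B) (snd s)) (cnt (Imp A B) R)).
    + apply (HImpR A B G D); auto; apply (Hprov 0); reflexivity.
    + eapply sim_step_ImpR; eauto.
  - destruct Hr as (G & D & B & S1 & -> & Hs & H1).
    eapply sim_step_Refl; eauto; apply Hkept; [|discriminate].
    apply (Permutation_in _ (Permutation_sym (proj1 Hs))); left; reflexivity.
  - destruct Hr as (G & Pi & D & A & S1 & S2 & -> & Hs & H1 & H2).
    assert (HS1 : provable S1) by (apply (Hprov 0); reflexivity).
    assert (HS2 : provable S2) by (apply (Hprov 1); reflexivity).
    destruct (classic ((exists x, cnt x G < cnt x L) \/
                       cnt (Box A) (snd s) <= cnt (Box A) R)) as [Hc|Hc]; [eauto|].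
    apply not_or_and in Hc as [HG HA].
    eapply sim_step_Box; eauto; [|lia].
    intro x; apply Nat.nlt_ge; intro Hx; apply HG; now exists x.
Qed.

End Replacement.

(** * Admissible rules *)

Ltac refute_ImpL := intros ? ? ? ? ? ? ? ? ? Hc _ _; exfalso; counts;
  match type of Hc with cnt ?f _ <= _ => count_at f end.
Ltac refute_ImpR := intros ? ? ? ? ? ? ? Hc _; exfalso; counts;
  match type of Hc with cnt ?f _ <= _ => count_at f end.
Ltac refute_Box := intros ? ? ? ? ? ? ? ? ? [[x Hx] | Hc] _ _; exfalso; counts;
  [count_at x | match type of Hc with cnt ?f _ <= _ => count_at f end].

Definition literal (x : form) : Prop := x = Bot \/ exists p, x = Var p.

Lemma count_literals_Imp a b l : Forall literal l -> cnt (Imp a b) l = 0.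
Proof.
  intro Hl; apply count_occ_not_In; intro Hin.
  destruct (proj1 (Forall_forall _ _) Hl _ Hin) as [E | [p E]]; discriminate.
Qed.

Lemma count_literals_Box a l : Forall literal l -> cnt (Box a) l = 0.
Proof.
  intro Hl; apply count_occ_not_In; intro Hin.
  destruct (proj1 (Forall_forall _ _) Hl _ Hin) as [E | [p E]]; discriminate.
Qed.

(* Literals are never principal in a rule with premises, nor boxed, so the
   special cases of [replaces_sim_step] cannot arise. *)
Lemma provable_replaces_literals L R L' R' s s' :
  Forall literal L -> Forall literal R -> incl L L' -> incl R R' ->
  provable s -> replaces L R L' R' s s' -> provable s'.
Proof.
  intros HL HR HLL' HRR'; apply provable_simulation; clear s s'.
  intros s s' r Ps Hss' Hr Hprov; apply (replaces_sim_step L R L' R' s s' r Ps Hss' Hr Hprov).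
  - intros x Hx; left; now apply HLL'.
  - intros p Hp; now apply HRR'.
  - intros A B G D S1 S2 Hs _ _ Hc _ _; exfalso.
    rewrite (count_literals_Imp A B L HL) in Hc; counts; count_at (Imp A B).
  - intros A B G D S1 Hs _ Hc _; exfalso.
    rewrite (count_literals_Imp A B R HR) in Hc; counts; count_at (Imp A B).
  - intros G Pi D A S1 S2 Hs _ _ [[x Hx] | Hc] _ _; exfalso.
    + assert (Hlit : literal x).
      { apply (proj1 (Forall_forall _ _) HL), (count_occ_In form_eq_dec); lia. }
      destruct Hlit as [-> | [p ->]]; counts; [count_at Bot | count_at (Var p)].
    + rewrite (count_literals_Box A R HR) in Hc; counts; count_at (Box A).
Qed.

Lemma provable_weaken s s' : provable s ->
  (forall x, cnt x (fst s) <= cnt x (fst s')) -> (forall x, cnt x (snd s) <= cnt x (snd s')) ->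
  provable s'.
Proof.
  intros Hs [kL HkL]%submultiset_split [kR HkR]%submultiset_split.
  apply (provable_replaces_literals [] [] kL kR s s'); auto using incl_nil_l.
  counts_of_seq_eq; repeat split; count_solve.
Qed.

Lemma provable_perm s s' : provable s -> seq_eq s s' -> provable s'.
Proof.
  intros Hs [H1 H2]%seq_eq_count; apply (provable_weaken s s' Hs);
    intro x; [rewrite H1 | rewrite H2]; apply le_n.
Qed.

Lemma provable_ImpR_inv A B G D : provable (G, Imp A B :: D) -> provable (A :: G, B :: D).
Proof.
  intro Hs; refine (provable_simulation (replaces [] [Imp A B] [A] [B]) _ _ _ Hs _);
    [clear Hs | counts; repeat split; count_solve].
  intros s s' r Ps Hss' Hr Hprov; apply (replaces_sim_step _ _ _ _ s s' r Ps Hss' Hr Hprov).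
  - intros x [].
  - intros p [E | []]; discriminate.
  - refute_ImpL.
  - intros A0 B0 G0 D0 S1 Hs H1 Hc HS1; left.
    destruct (form_eq_dec (Imp A0 B0) (Imp A B)) as [E | NE].
    + injection E as -> ->; apply (provable_perm _ _ HS1).
      apply seq_eq_count; counts; split; count_solve.
    + exfalso; counts; count_at (Imp A0 B0).
  - refute_Box.
Qed.

Lemma provable_ImpL_inv1 A B G D : provable (Imp A B :: G, D) -> provable (B :: G, D).
Proof.
  intro Hs; refine (provable_simulation (replaces [Imp A B] [] [B] []) _ _ _ Hs _);
    [clear Hs | counts; repeat split; count_solve].
  intros s s' r Ps Hss' Hr Hprov; apply (replaces_sim_step _ _ _ _ s s' r Ps Hss' Hr Hprov).
  - intros x [<- | []]; right; eauto.
  - intros p [].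
  - intros A0 B0 G0 D0 S1 S2 Hs H1 H2 Hc HS1 _; left.
    destruct (form_eq_dec (Imp A0 B0) (Imp A B)) as [E | NE].
    + injection E as -> ->; apply (provable_perm _ _ HS1).
      apply seq_eq_count; counts; split; count_solve.
    + exfalso; counts; count_at (Imp A0 B0).
  - refute_ImpR.
  - refute_Box.
Qed.

Lemma provable_ImpL_inv2 A B G D : provable (Imp A B :: G, D) -> provable (G, A :: D).
Proof.
  intro Hs; refine (provable_simulation (replaces [Imp A B] [] [] [A]) _ _ _ Hs _);
    [clear Hs | counts; repeat split; count_solve].
  intros s s' r Ps Hss' Hr Hprov; apply (replaces_sim_step _ _ _ _ s s' r Ps Hss' Hr Hprov).
  - intros x [<- | []]; right; eauto.
  - intros p [].
  - intros A0 B0 G0 D0 S1 S2 Hs H1 H2 Hc _ HS2; left.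
    destruct (form_eq_dec (Imp A0 B0) (Imp A B)) as [E | NE].
    + injection E as -> ->; apply (provable_perm _ _ HS2).
      apply seq_eq_count; counts; split; count_solve.
    + exfalso; counts; count_at (Imp A0 B0).
  - refute_ImpR.
  - refute_Box.
Qed.

Definition cl_admissible (A : form) : Prop :=
  forall G D, provable (A :: A :: G, D) -> provable (A :: G, D).

Definition cr_admissible (A : form) : Prop :=
  forall G D, provable (G, A :: A :: D) -> provable (G, A :: D).

Lemma cl_admissible_Bot : cl_admissible Bot.
Proof.
  intros G D _; apply (provable_rule RBot _ []); [split; [reflexivity | now left]|].
  intros [|i] P E; discriminate.
Qed.

Lemma cr_admissible_Bot : cr_admissible Bot.
Proof.
  intros G D Hs.
  apply (provable_replaces_literals [] [Bot; Bot] [] [Bot] (G, Bot :: Bot :: D)).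
  - constructor.
  - apply Forall_forall; intros x [<- | [<- | []]]; now left.
  - apply incl_nil_l.
  - intros x [<- | [<- | []]]; now left.
  - exact Hs.
  - counts; repeat split; count_solve.
Qed.

Lemma cl_admissible_Var p : cl_admissible (Var p).
Proof.
  intros G D Hs.
  apply (provable_replaces_literals [Var p; Var p] [] [Var p] [] (Var p :: Var p :: G, D)).
  - apply Forall_forall; intros x [<- | [<- | []]]; right; now exists p.
  - constructor.
  - intros x [<- | [<- | []]]; now left.
  - apply incl_nil_l.
  - exact Hs.
  - counts; repeat split; count_solve.
Qed.

Lemma cr_admissible_Var p : cr_admissible (Var p).
Proof.
  intros G D Hs.
  apply (provable_replaces_literals [] [Var p; Var p] [] [Var p] (G, Var p :: Var p :: D)).
  - constructor.
  - apply Forall_forall; intros x [<- | [<- | []]]; right; now exists p.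
  - apply incl_nil_l.
  - intros x [<- | [<- | []]]; now left.
  - exact Hs.
  - counts; repeat split; count_solve.
Qed.

Lemma cl_admissible_Imp A B : cr_admissible A -> cl_admissible B -> cl_admissible (Imp A B).
Proof.
  intros HA HB G D Hs.
  assert (HBG : provable (B :: G, D)).
  { apply HB, (provable_ImpL_inv1 A), (provable_perm (B :: Imp A B :: G, D)).
    - now apply (provable_ImpL_inv1 A).
    - apply seq_eq_count; split; count_solve. }
  assert (HAD : provable (G, A :: D))
    by now apply HA, (provable_ImpL_inv2 A B), (provable_ImpL_inv2 A B).
  apply (provable_rule RImpL _ [(B :: G, D); (G, A :: D)]).
  - exists G, D, A, B, (B :: G, D), (G, A :: D); repeat split; apply seq_eq_refl.
  - intros [|[|[]]] P E; inversion E; subst; assumption.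
Qed.

Lemma cr_admissible_Imp A B : cl_admissible A -> cr_admissible B -> cr_admissible (Imp A B).
Proof.
  intros HA HB G D Hs.
  assert (HAB : provable (A :: G, B :: D)).
  { apply HA, HB, (provable_ImpR_inv A B), (provable_perm (A :: G, B :: Imp A B :: D)).
    - now apply provable_ImpR_inv.
    - apply seq_eq_count; split; count_solve. }
  apply (provable_rule RImpR _ [(A :: G, B :: D)]).
  - exists G, D, A, B, (A :: G, B :: D); repeat split; apply seq_eq_refl.
  - intros [|[]] P E; inversion E; subst; assumption.
Qed.

(* If [Box B] occurs twice in the boxed context of the (Box) rule, the copy
   is dropped from both premises, so the right premise is again related; else
   the boxed context survives the contraction and the right premise is kept. *)
Lemma sim_step_Box_contract B s s' G Pi D A S1 S2 :
  replaces [Box B; Box B] [] [Box B] [] s s' ->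
  seq_eq s (G ++ map Box Pi, Box A :: D) -> seq_eq S1 (G ++ map Box Pi, A :: D) ->
  seq_eq S2 (map Box Pi, [A]) -> provable S2 ->
  sim_step (replaces [Box B; Box B] [] [Box B] []) s' RBox [S1; S2].
Proof.
  intros Hss' Hs H1 H2 HS2.
  destruct (In_perm_cons (Box A) (snd s')) as [D' HD'].
  { apply (count_occ_In form_eq_dec); counts; count_at (Box A). }
  right; destruct (le_lt_dec 2 (cnt B Pi)) as [Htwo | Hone].
  - destruct (In_perm_cons B Pi) as [Pi' HPi'].
    { apply (count_occ_In form_eq_dec); lia. }
    apply (Permutation_map Box) in HPi'; cbn [map] in HPi'.
    destruct (submultiset_split (map Box Pi') (fst s')) as [G' HG'].
    { counts; count_solve. }
    exists RBox, [(G' ++ map Box Pi', A :: D'); (map Box Pi', [A])]; split.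
    + exists G', Pi', D', A, (G' ++ map Box Pi', A :: D'), (map Box Pi', [A]).
      split; [reflexivity|]; split; [split; assumption|]; split; apply seq_eq_refl.
    + intros [|[|[]]] P' E; inversion E; subst; right.
      * exists 0, S1; split; [reflexivity|]; split; [counts; repeat split; count_solve|].
        intros [? ?]; discriminate.
      * exists 1, S2; split; [reflexivity|]; split; [counts; repeat split; count_solve|].
        intros _; split; reflexivity.
  - destruct (submultiset_split (map Box Pi) (fst s')) as [G' HG'].
    { counts; count_solve. }
    exists RBox, [(G' ++ map Box Pi, A :: D'); S2]; split.
    + exists G', Pi, D', A, (G' ++ map Box Pi, A :: D'), S2.
      split; [reflexivity|]; split; [split; assumption|]; split; [apply seq_eq_refl | exact H2].
    + intros [|[|[]]] P' E; inversion E; subst; [right | left; exact HS2].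
      exists 0, S1; split; [reflexivity|]; split; [counts; repeat split; count_solve|].
      intros [? ?]; discriminate.
Qed.

Lemma cl_admissible_Box B : cl_admissible (Box B).
Proof.
  intros G D Hs.
  refine (provable_simulation (replaces [Box B; Box B] [] [Box B] []) _ _ _ Hs _);
    [clear Hs | counts; repeat split; count_solve].
  intros s s' r Ps Hss' Hr Hprov; apply (replaces_sim_step _ _ _ _ s s' r Ps Hss' Hr Hprov).
  - intros x [<- | [<- | []]]; left; now left.
  - intros p [].
  - refute_ImpL.
  - refute_ImpR.
  - intros G0 Pi D0 A S1 S2 Hs H1 H2 _ _ HS2; eapply sim_step_Box_contract; eauto.
Qed.

(* When the principal [Box B] is one of the contracted copies, the right
   premise [Box Pi => B] alone yields the conclusion by weakening. *)
Lemma cr_admissible_Box B : cr_admissible (Box B).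
Proof.
  intros G D Hs.
  refine (provable_simulation (replaces [] [Box B; Box B] [] [Box B]) _ _ _ Hs _);
    [clear Hs | counts; repeat split; count_solve].
  intros s s' r Ps Hss' Hr Hprov; apply (replaces_sim_step _ _ _ _ s s' r Ps Hss' Hr Hprov).
  - intros x [].
  - intros p [E | [E | []]]; discriminate.
  - refute_ImpL.
  - refute_ImpR.
  - intros G0 Pi D0 A S1 S2 Hs H1 H2 [[x Hx] | Hc] _ HS2.
    { exfalso; counts; count_at x. }
    destruct (form_eq_dec A B) as [-> | NE].
    2: { exfalso; counts; count_at (Box A). }
    destruct (submultiset_split (map Box Pi) (fst s')) as [G' HG'].
    { counts; count_solve. }
    destruct (In_perm_cons (Box B) (snd s')) as [D' HD'].
    { apply (count_occ_In form_eq_dec); counts; count_at (Box B). }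
    left; apply (provable_rule RBox _ [(G' ++ map Box Pi, B :: D'); S2]).
    + exists G', Pi, D', B, (G' ++ map Box Pi, B :: D'), S2.
      split; [reflexivity|]; split; [split; assumption|]; split; [apply seq_eq_refl | exact H2].
    + intros [|[|[]]] P E; inversion E; subst; [|exact HS2].
      apply (provable_weaken _ _ HS2); counts; count_solve.
Qed.

Theorem lemma8p2 : forall (A : form) (G D : list form),
  (provable (A :: A :: G, D) -> provable (A :: G, D)) /\
  (provable (G, A :: A :: D) -> provable (G, A :: D)).
Proof.
  enough (H : forall A, cl_admissible A /\ cr_admissible A) by (intros A G D; split; apply H).
  induction A as [| p | A IHA B IHB | B _].
  - split; [apply cl_admissible_Bot | apply cr_admissible_Bot].
  - split; [apply cl_admissible_Var | apply cr_admissible_Var].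
  - split; [apply cl_admissible_Imp | apply cr_admissible_Imp]; tauto.
  - split; [apply cl_admissible_Box | apply cr_admissible_Box].
Qed.
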